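(* Let $G$ be a $k$-degenerate graph with maximum degree $\Delta(G)$ and let $H$ be an $l$-degenerate graph. Then $AT(G+_T H)\le \max\{2\Delta(G),\,k+l\}+1$.
   Context: A graph is $k$-degenerate if its vertices can be successively deleted so that each deleted vertex has degree at most $k$ at the time of deletion. For an orientation $D$, a subdigraph is Eulerian if every vertex has equal in- and outdegree in it; $D$ is an AT-orientation if the numbers of Eulerian subgraphs with an even and with an odd number of arcs differ; $AT(G)$ is the smallest $k$ such that $G$ has an AT-orientation of maximum outdegree at most $k-1$. $T(G)$ has vertex set $V(G)\cup E(G)$: it consists of $G$, together with, for each edge $e=xy$, edges $ex$ and $ey$, and edges $ee'$ whenever edges $e,e'$ are adjacent in $G$. $G+_T H$ has vertex set $(V(G)\cup E(G))\times V(H)$, with $(u_1,u_2)\sim(v_1,v_2)$ iff [$u_1=v_1\in V(G)$ and $u_2v_2\in E(H)$] or [$u_2=v_2$ and $u_1v_1\in E(T(G))$]. *)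

From mathcomp Require Import all_boot.
Set Implicit Arguments. Unset Strict Implicit. Unset Printing Implicit Defensive.

(* Finite simple graphs are given as a relation [g : rel V] on a finType,
   with hypotheses [symmetric g] and [irreflexive g] stated in the theorem. *)

Section Graphs.
Variable V : finType.
Implicit Type g : rel V.

(* k-degenerate: there is an enumeration s of all vertices (deletion order)
   such that each vertex x has at most k neighbours among the vertices deleted
   after it (i.e. degree <= k in the graph remaining when x is deleted). *)
Definition degenerate g (k : nat) : Prop :=
  exists s : seq V, [/\ uniq s, (forall v, v \in s) &
    forall (s1 s2 : seq V) (x : V), s = s1 ++ x :: s2 ->
      #|[set y in s2 | g x y]| <= k].

Definition deg g (v : V) : nat := #|[set y | g v y]|.

Definition maxdeg g : nat := \max_(v : V) deg g v.

Definition is_edge g : pred {set V} :=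
  fun A => [exists x, exists y, g x y && (A == [set x; y])].

Definition edges g := {A : {set V} | is_edge g A}.

Definition Trel g : rel (V + edges g) :=
  fun a b => match a, b with
  | inl u, inl v => g u v
  | inl u, inr e => u \in val e
  | inr e, inl u => u \in val e
  | inr e, inr f => (e != f) && (val e :&: val f != set0)
  end.
End Graphs.

Definition plusT (V W : finType) (g : rel V) (h : rel W)
  : rel ((V + edges g) * W) :=
  fun a b =>
    (match a.1, b.1 with inl u, inl v => (u == v) && h a.2 b.2 | _, _ => false end)
    || ((a.2 == b.2) && @Trel V g a.1 b.1).

Section AT.
Variable X : finType.
Variable adj : rel X.

Definition is_orientation (D : {set X * X}) : bool :=
  [forall x, forall y, adj x y == (((x, y) \in D) || ((y, x) \in D))] &&
  [forall x, forall y, ((x, y) \in D) ==> ((y, x) \notin D)].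

Definition outdeg (D : {set X * X}) (x : X) : nat := #|[set y | (x, y) \in D]|.

Definition eulerian_sub (D S : {set X * X}) : bool :=
  (S \subset D) &&
  [forall v, #|[set a in S | a.1 == v]| == #|[set a in S | a.2 == v]|].

Definition n_even_euler (D : {set X * X}) : nat :=
  #|[set S : {set X * X} | eulerian_sub D S & ~~ odd #|S|]|.
Definition n_odd_euler (D : {set X * X}) : nat :=
  #|[set S : {set X * X} | eulerian_sub D S & odd #|S|]|.

Definition AT_orientation (D : {set X * X}) : bool :=
  is_orientation D && (n_even_euler D != n_odd_euler D).

Definition has_AT (k : nat) : bool :=
  [exists D : {set X * X}, AT_orientation D && [forall x, outdeg D x < k]].

(* Any orientation has maximum outdegree
   <= #|X| - 1, so the minimum (which exists: acyclic orientations are AT)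
   lies in [0, #|X|]; the default value #|X|.+1 is never attained. *)
Definition AT : nat := \big[minn/#|X|.+1]_(k < #|X|.+1 | has_AT k) k.
End AT.
Arguments plusT [V W] g h _ _.

From mathcomp Require Import all_boot zify.
From mathcomp Require Import order.
Set Implicit Arguments. Unset Strict Implicit. Unset Printing Implicit Defensive.

(* Any injective ranking [r] of the vertices orients every edge towards the
   higher rank.  This orientation is acyclic, so its only Eulerian subgraph is
   the empty one and it is an AT-orientation; hence AT is at most one more
   than the largest number of higher-ranked neighbours of a vertex.  For
   G +_T H rank all copies (e, w) of edge-vertices below all copies (v, w) of
   vertices, and order the latter lexicographically by degeneracy orders of G
   and H.  A vertex (e, w) then sees at most its |N_T(e)| <= 2 Delta(G)
   neighbours in its own copy of T(G), and a vertex (v, w) sees at most k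
   later neighbours v' in its copy of G and l later neighbours w' in its copy
   of H. *)

Section RankOrientation.
Variables (X : finType) (adj : rel X).
Hypotheses (adjS : symmetric adj) (adjI : irreflexive adj).
Variable r : X -> nat.
Hypothesis r_inj : injective r.

Definition rank_orientation : {set X * X} := [set p | adj p.1 p.2 && (r p.1 < r p.2)].

Definition upper_nbrs (x : X) : {set X} := [set y | adj x y & r x < r y].

Lemma rank_orientation_is_orientation : is_orientation adj rank_orientation.
Proof.
apply/andP; split; apply/forallP=> x; apply/forallP=> y; rewrite !inE /=.
  rewrite (adjS y x); case: (boolP (adj x y)) => //= adj_xy; apply/eqP.
  have neq_xy : x != y by apply: contraTneq adj_xy => ->; rewrite adjI.
  by case: ltngtP => // /r_inj eq_xy; rewrite eq_xy eqxx in neq_xy.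
by apply/implyP=> /andP[_ lt_xy]; rewrite negb_and ltnNge ltnW ?orbT.
Qed.

(* An arc of minimal tail rank in S would need an arc of S entering its tail. *)
Lemma eulerian_sub_rank_orientation (S : {set X * X}) :
  eulerian_sub rank_orientation S -> S = set0.
Proof.
case/andP=> /subsetP sub_SD /forallP balanced; apply/setP=> a0; rewrite inE.
apply/negbTE/negP=> Sa0.
have [a Sa min_a] := arg_minnP (fun a : X * X => r a.1) Sa0.
have /eqP out_eq_in := balanced a.1.
have /card_gt0P[b] : 0 < #|[set b in S | b.2 == a.1]|.
  by rewrite -out_eq_in; apply/card_gt0P; exists a; rewrite inE eqxx andbT.
rewrite inE => /andP[Sb /eqP b2_eq].
have := sub_SD b Sb; rewrite inE b2_eq => /andP[_].
by rewrite ltnNge min_a.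
Qed.

Lemma rank_orientation_AT : AT_orientation adj rank_orientation.
Proof.
rewrite /AT_orientation rank_orientation_is_orientation /n_even_euler /n_odd_euler.
have euler_set0 S : eulerian_sub rank_orientation S = (S == set0).
  apply/idP/eqP => [/eulerian_sub_rank_orientation //|->].
  rewrite /eulerian_sub sub0set; apply/forallP=> v.
  by rewrite !eq_card0 // => z; rewrite !inE.
have -> : [set S | eulerian_sub rank_orientation S & ~~ odd #|S|] = [set set0].
  by apply/setP=> S; rewrite !inE euler_set0; case: eqP => // ->; rewrite cards0.
have -> : [set S | eulerian_sub rank_orientation S & odd #|S|] = set0.
  by apply/setP=> S; rewrite !inE euler_set0; case: eqP => // ->; rewrite cards0.
by rewrite cards1 cards0.
Qed.

Lemma AT_le_of_has_AT k : has_AT adj k -> AT adj <= k.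
Proof.
move=> AT_k; rewrite /AT; case: (ltnP k #|X|.+1) => [lt_k | ge_k].
  have := @Order.TotalTheory.bigmin_le_cond _ nat _ #|X|.+1
    (Ordinal lt_k) (fun i : 'I_#|X|.+1 => has_AT adj i) val AT_k.
  exact.
apply: leq_trans ge_k; elim/big_ind: _ => // [m n le_m _|i _].
  by rewrite geq_min le_m.
exact: ltnW (ltn_ord i).
Qed.

Lemma AT_le_upper_nbrs d : (forall x, #|upper_nbrs x| <= d) -> AT adj <= d.+1.
Proof.
move=> upper_le; apply: AT_le_of_has_AT; apply/existsP; exists rank_orientation.
rewrite rank_orientation_AT; apply/forallP=> x; rewrite ltnS.
by apply: leq_trans (upper_le x); apply: subset_leq_card; apply/subsetP=> y; rewrite !inE.
Qed.
End RankOrientation.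

Lemma index_lt_mem_suffix (T : eqType) (s1 s2 : seq T) x y :
  x \notin s1 -> y \in s1 ++ x :: s2 ->
  index x (s1 ++ x :: s2) < index y (s1 ++ x :: s2) -> y \in s2.
Proof.
move=> x_s1; rewrite !index_cat (negbTE x_s1) /= eqxx addn0 mem_cat.
case: ifPn => [y_s1 _ | _ /=]; first by rewrite ltnNge ltnW // index_mem.
by rewrite inE eq_sym; case: eqP => [_|_ /= ->]; rewrite ?addn0 ?ltnn.
Qed.

Lemma degenerate_index (V : finType) (g : rel V) k : degenerate g k ->
  exists2 s : seq V, forall v, v \in s &
    forall x, #|[set y | g x y & index x s < index y s]| <= k.
Proof.
case=> s [uniq_s all_s later_le]; exists s => // x.
case/splitPr def_s: {-1}s / (all_s x) => [s1 s2].
have x_s1 : x \notin s1 by move: uniq_s; rewrite def_s cat_uniq /= => /and3P[_ /norP[] ].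
apply: leq_trans (later_le _ _ _ def_s); apply: subset_leq_card; apply/subsetP=> y.
rewrite !inE => /andP[-> lt_xy]; rewrite andbT.
by rewrite def_s in lt_xy; apply: index_lt_mem_suffix lt_xy; rewrite -?def_s.
Qed.

Section EdgeVertices.
Variables (V : finType) (g : rel V).
Hypothesis gS : symmetric g.

Definition incident_edges (x : V) : {set edges g} := [set f : edges g | x \in val f].

Lemma edge_other_end (f : edges g) x :
  x \in val f -> exists2 z, g x z & val f = [set x; z].
Proof.
case: f => A /= /existsP[a /existsP[c /andP[g_ac /eqP ->]]] /set2P[->|->].
  by exists c.
by exists a; rewrite 1?gS // setUC.
Qed.

Lemma card_incident_edges x : #|incident_edges x| <= deg g x.
Proof.
rewrite -(card_imset _ val_inj).
apply: leq_trans (leq_imset_card (fun z => [set x; z]) [set z | g x z]).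
apply: subset_leq_card; apply/subsetP=> A /imsetP[f]; rewrite inE => x_f ->.
by have [z g_xz ->] := edge_other_end x_f; apply/imsetP; exists z; rewrite ?inE.
Qed.

Lemma Trel_edge_nbrs_sub (e : edges g) x y : val e = [set x; y] ->
  [set b | Trel (inr e) b] \subset
    inl @: val e :|: inr @: (incident_edges x :\ e :|: incident_edges y :\ e).
Proof.
move=> e_xy; apply/subsetP=> -[u|f]; rewrite !inE /=.
  by move=> e_u; apply/orP; left; apply: imset_f.
case/andP=> e_neq_f /set0Pn[z]; rewrite inE => /andP[e_z f_z].
apply/orP; right; apply: imset_f; rewrite !inE eq_sym e_neq_f /=.
by move: e_z; rewrite e_xy => /set2P[<-|<-]; rewrite f_z ?orbT.
Qed.

(* For e = xy, N_T(e) consists of x, y and at most (deg x - 1) + (deg y - 1)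
   other edges. *)
Lemma card_Trel_edge_nbrs (e : edges g) :
  #|[set b | Trel (inr e) b]| <= 2 * maxdeg g.
Proof.
have [x [y e_xy]] : exists x y, val e = [set x; y].
  by case: e => A /= /existsP[a /existsP[c /andP[_ /eqP ->]]]; exists a, c.
have card_inc z : z \in val e -> #|incident_edges z :\ e| < deg g z.
  move=> e_z; apply: leq_trans (card_incident_edges z).
  by rewrite (cardsD1 e (incident_edges z)) inE e_z.
have deg_le z : deg g z <= maxdeg g by apply: (leq_bigmax (F := deg g)).
have card_ends : #|val e| <= 2 by rewrite e_xy cards2 ltnS leq_b1.
have card_others : #|incident_edges x :\ e :|: incident_edges y :\ e|
    <= #|incident_edges x :\ e| + #|incident_edges y :\ e| := leq_card_setU _ _.
have := card_inc x; have := card_inc y; rewrite e_xy set21 set22 => inc_y inc_x.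
apply: leq_trans (subset_leq_card (Trel_edge_nbrs_sub e_xy)) _.
apply: leq_trans (leq_card_setU _ _) _.
rewrite !card_imset; [|exact: inr_inj|exact: inl_inj].
have := deg_le x; have := deg_le y; lia.
Qed.
End EdgeVertices.

Section PlusTRank.
Variables (V W : finType) (g : rel V) (h : rel W).
Variables (sg : seq V) (sh : seq W).
Hypotheses (all_sg : forall v, v \in sg) (all_sh : forall w, w \in sh).

Definition plusT_rank (a : (V + edges g) * W) : nat :=
  match a.1 with
  | inr e => enum_rank (e, a.2)
  | inl v => #|{: edges g * W}| + (index v sg * size sh + index a.2 sh)
  end.

Lemma plusT_rank_edge_lt e w v w' : plusT_rank (inr e, w) < plusT_rank (inl v, w').
Proof. by rewrite /plusT_rank /= (leq_trans (ltn_ord _)) ?leq_addr. Qed.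

Lemma plusT_rank_inj : injective plusT_rank.
Proof.
have index_lt w : index w sh < size sh by rewrite index_mem.
case=> [[v|e] w] [[v'|e'] w'].
- rewrite /plusT_rank /= => /addnI /(congr1 (edivn^~ (size sh))).
  rewrite !edivn_eq ?index_lt // => -[eq_v eq_w].
  by rewrite (index_inj v (all_sg v) (all_sg v') eq_v) (index_inj w (all_sh w) (all_sh w') eq_w).
- by move=> eq_rank; have := plusT_rank_edge_lt e' w' v w; rewrite -eq_rank ltnn.
- by move=> eq_rank; have := plusT_rank_edge_lt e w v' w'; rewrite eq_rank ltnn.
- by move/val_inj/enum_rank_inj => [-> ->].
Qed.

Variables (k l : nat).
Hypothesis gS : symmetric g.
Hypothesis later_g : forall v, #|[set u | g v u & index v sg < index u sg]| <= k.
Hypothesis later_h : forall w, #|[set w' | h w w' & index w sh < index w' sh]| <= l.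

Lemma card_upper_nbrs_plusT a :
  #|upper_nbrs (plusT g h) plusT_rank a| <= maxn (2 * maxdeg g) (k + l).
Proof.
case: a => [[v|e] w].
- set A := [set w' | h w w' & index w sh < index w' sh].
  set B := [set u | g v u & index v sg < index u sg].
  have sub_AB : upper_nbrs (plusT g h) plusT_rank (inl v, w) \subset
      (pair (inl v)) @: A :|: (fun u => (inl u, w)) @: B.
    apply/subsetP=> -[[u|f] w']; rewrite !inE /plusT; last first.
      by rewrite ltnNge ltnW ?andbF ?plusT_rank_edge_lt.
    rewrite /plusT_rank /=; case/andP=> /orP[/andP[/eqP <- h_ww']|/andP[/eqP <- g_vu]] lt_rank.
        apply/orP; left; apply: imset_f; rewrite inE h_ww'.
        by move: lt_rank; rewrite !ltn_add2l.
      apply/orP; right; apply: imset_f; rewrite inE g_vu.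
      by move: lt_rank; rewrite !ltn_add2l ltn_add2r ltn_mul2r => /andP[].
  apply: leq_trans (subset_leq_card sub_AB) _.
  apply: leq_trans (leq_card_setU _ _) _.
  apply: leq_trans (leq_maxr _ _); rewrite addnC.
  apply: leq_add; apply: leq_trans (leq_imset_card _ _) _; [exact: later_g | exact: later_h].
- have sub_T : upper_nbrs (plusT g h) plusT_rank (inr e, w) \subset
      (fun b => (b, w)) @: [set b | Trel (inr e) b].
    apply/subsetP=> -[b w']; rewrite !inE /plusT /= => /andP[/andP[/eqP <- T_eb] _].
    by apply: imset_f; rewrite inE.
  apply: leq_trans (subset_leq_card sub_T) _.
  apply: leq_trans (leq_imset_card _ _) _.
  exact: leq_trans (card_Trel_edge_nbrs gS e) (leq_maxl _ _).
Qed.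
End PlusTRank.

Lemma plusT_sym (V W : finType) (g : rel V) (h : rel W) :
  symmetric g -> symmetric h -> symmetric (plusT g h).
Proof.
move=> gS hS [a w] [b w']; rewrite /plusT /= (eq_sym w').
case: a => [u|e]; case: b => [u'|f] //=; first by rewrite eq_sym hS gS.
by rewrite (eq_sym f) setIC.
Qed.

Lemma plusT_irr (V W : finType) (g : rel V) (h : rel W) :
  irreflexive g -> irreflexive h -> irreflexive (plusT g h).
Proof. by move=> gI hI [[u|e] w]; rewrite /plusT /= ?gI ?hI ?eqxx ?andbF. Qed.

Theorem corollary3p10 (V W : finType) (g : rel V) (h : rel W) (k l : nat) :
  symmetric g -> irreflexive g -> symmetric h -> irreflexive h ->
  degenerate g k -> degenerate h l ->
  AT (plusT g h) <= (maxn (2 * maxdeg g) (k + l)).+1.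
Proof.
move=> gS gI hS hI /degenerate_index[sg all_sg later_g].
move=> /degenerate_index[sh all_sh later_h].
apply: (AT_le_upper_nbrs (plusT_sym gS hS) (plusT_irr gI hI)).
  exact: plusT_rank_inj all_sg all_sh.
exact: card_upper_nbrs_plusT.
Qed.
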